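(* Let $A\to X\to Y\to B$ be a Markov chain of random variables on finite sets, $f:[0,\infty)\to\mathbb{R}$ convex with $f(1)=0$, and $G$ an increasing convex function on $[0,\infty)$. Then $I_{G,f}(A;B)\le I_{G,f}(X;Y)$.
   Context: $D_f(p\|q)=\sum_y q(y) f(p(y)/q(y))$ with $0f(0/0)=0$. $I_{G,f}(U;V)=\min_{q_V}\sum_u p_U(u)\,G(D_f(p_{V|U=u}\|q_V))$, minimum over distributions on the alphabet of $V$. *)

From HB Require Import structures.
From mathcomp Require Import all_boot all_order all_algebra.
From mathcomp Require Import all_classical all_reals ereal.
Set Implicit Arguments. Unset Strict Implicit. Unset Printing Implicit Defensive.
Import Order.TTheory GRing.Theory Num.Theory.
Local Open Scope classical_set_scope.
Local Open Scope ring_scope.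

Section Defs.
Variable R : realType.

Definition convex_nonneg (f : R -> R) : Prop :=
  forall x y t, 0 <= x -> 0 <= y -> 0 <= t -> t <= 1 ->
    f (t * x + (1 - t) * y) <= t * f x + (1 - t) * f y.

Definition incr_nonneg (G : R -> R) : Prop :=
  forall x y, 0 <= x -> x <= y -> G x <= G y.

(* f'(oo) = lim_{t -> oo} f(t)/t = sup_{t > 0} (f t - f 0)/t  for convex f *)
Definition fslope_inf (f : R -> R) : \bar R :=
  ereal_sup [set ((f t - f 0) / t)%:E | t in [set t : R | 0 < t]].

Definition persp (f : R -> R) (p q : R) : \bar R :=
  if 0 < q then (q * f (p / q))%:E
  else if p == 0 then 0%E else (p%:E * fslope_inf f)%E.

Definition Df {T : finType} (f : R -> R) (p q : T -> R) : \bar R :=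
  (\sum_(y : T) persp f (p y) (q y))%E.

Definition Gext (G : R -> R) (x : \bar R) : \bar R :=
  match x with
  | x%:E => (G x)%:E
  | +oo%E => +oo%E
  | -oo%E => -oo%E
  end.

Definition is_distr {T : finType} (q : T -> R) : Prop :=
  (forall t, 0 <= q t) /\ \sum_(t : T) q t = 1.

Definition marg1 {TU TV : finType} (pUV : TU -> TV -> R) (u : TU) : R :=
  \sum_(v : TV) pUV u v.

Definition cond {TU TV : finType} (pUV : TU -> TV -> R) (u : TU) : TV -> R :=
  fun v => pUV u v / marg1 pUV u.

Definition IGf {TU TV : finType} (G f : R -> R) (pUV : TU -> TV -> R) : \bar R :=
  ereal_inf [set (\sum_(u : TU | (0 < marg1 pUV u)%R)
                    (marg1 pUV u)%:E * Gext G (Df f (cond pUV u) q))%E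
            | q in [set q : TV -> R | is_distr q]].

(* Markov chain A -> X -> Y -> B : the joint pmf factors through
   stochastic kernels p(a,x,y,b) = p(a) W1(x|a) W2(y|x) W3(b|y) *)
Definition stoch {T1 T2 : finType} (W : T1 -> T2 -> R) : Prop :=
  forall t, is_distr (W t).

Definition markov4 {TA TX TY TB : finType} (P : TA -> TX -> TY -> TB -> R) : Prop :=
  exists (pA : TA -> R) (W1 : TA -> TX -> R) (W2 : TX -> TY -> R) (W3 : TY -> TB -> R),
    [/\ is_distr pA, stoch W1, stoch W2, stoch W3 &
        forall a x y b, P a x y b = pA a * W1 a x * W2 x y * W3 y b].

Definition pAB {TA TX TY TB : finType} (P : TA -> TX -> TY -> TB -> R) : TA -> TB -> R :=
  fun a b => \sum_(x : TX) \sum_(y : TY) P a x y b.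

Definition pXY {TA TX TY TB : finType} (P : TA -> TX -> TY -> TB -> R) : TX -> TY -> R :=
  fun x y => \sum_(a : TA) \sum_(b : TB) P a x y b.

End Defs.

(* Fix a competitor q on Y and push it through W3 to get a competitor q W3 on B.
   For each a, data processing through W3 and convexity of D_f in its first
   argument give D_f(p_{B|a} || q W3) <= sum_x W1(x|a) D_f(p_{Y|x} || q); as G
   is increasing and convex (Jensen), averaging over a turns the A-B objective
   at q W3 into a lower bound for the X-Y objective at q.  Both convexity facts,
   and Jensen itself, reduce to subadditivity of the perspective
   (p, q) |-> q f(p/q), which at q = 0 is p f'(oo); this boundary case is
   where the slope bound f(x + h) - f(x) <= f'(oo) h is needed. *)

From HB Require Import structures.
From mathcomp Require Import all_boot all_order all_algebra.
From mathcomp Require Import all_classical all_reals ereal.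
From mathcomp Require Import ring lra.
Set Implicit Arguments. Unset Strict Implicit. Unset Printing Implicit Defensive.
Import Order.TTheory GRing.Theory Num.Theory.
Local Open Scope ring_scope.

Section ConvexNonneg.
Variables (R : realType) (F : R -> R).
Hypothesis convF : convex_nonneg F.

Lemma convex_chord_slope (x h d : R) : 0 <= x -> 0 < h -> h <= d ->
  d * (F (x + h) - F x) <= h * (F (x + d) - F x).
Proof.
move=> x0 hp hd; have dp : 0 < d := lt_le_trans hp hd.
have t0 : 0 <= h / d := divr_ge0 (ltW hp) (ltW dp).
have t1 : h / d <= 1 by rewrite ler_pdivrMr // mul1r.
have := @convF (x + d) x (h / d) (addr_ge0 x0 (ltW dp)) x0 t0 t1.
have -> : h / d * (x + d) + (1 - h / d) * x = x + h by field; rewrite gt_eqF.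
rewrite -(ler_pM2l dp).
have -> : d * (h / d * F (x + d) + (1 - h / d) * F x) = h * F (x + d) + (d - h) * F x.
  by field; rewrite gt_eqF.
lra.
Qed.

Lemma convex_increment_le (r x h : R) :
  (forall t, 0 < t -> F t - F 0 <= r * t) -> 0 <= x -> 0 <= h ->
  F (x + h) - F x <= r * h.
Proof.
move=> Fr x0; rewrite le_eqVlt => /predU1P[<-|hp]; first by rewrite addr0 subrr mulr0.
apply/ler_addgt0Pr => e ep.
(* The chord from x to x + d has slope at most r + K / d, and d is chosen with K / d <= e. *)
set K := r * x + F 0 - F x.
set d := h + h * `|K| / e.
have hd : h <= d by rewrite lerDl divr_ge0 ?mulr_ge0 // ltW.
have dp : 0 < d := lt_le_trans hp hd.
have chord := convex_chord_slope x0 hp hd.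
have Fd : h * (F (x + d) - F x) <= h * K + r * h * d.
  have -> : h * K + r * h * d = h * (r * (x + d) + F 0 - F x) by rewrite /K; ring.
  by rewrite ler_pM2l //; have := Fr (x + d) (ltr_wpDl x0 dp); lra.
have hK : h * K <= h * `|K| by rewrite ler_pM2l // ler_norm.
have ed : e * (d - h) = h * `|K| by rewrite /d; field; rewrite gt_eqF.
have eh : 0 <= e * h by rewrite mulr_ge0 // ltW.
rewrite -(ler_pM2l dp); lra.
Qed.

End ConvexNonneg.

Section Perspective.
Variables (R : realType) (f : R -> R).
Local Notation s := (fslope_inf f).
Local Open Scope ereal_scope.

Lemma fslope_inf_ge (t : R) : (0 < t)%R -> ((f t - f 0) / t)%:E <= s.
Proof. by move=> tp; apply: ereal_sup_ubound; exists t. Qed.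

Lemma fslope_inf_neqNy : s != -oo.
Proof. by have := fslope_inf_ge ltr01; case: s. Qed.

Lemma persp00 : persp f 0 0 = 0.
Proof. by rewrite /persp ltxx eqxx. Qed.

Lemma persp0 (p : R) : persp f p 0 = p%:E * s.
Proof. by rewrite /persp ltxx; case: eqP => [->|//]; rewrite mul0e. Qed.

Lemma persp_gt0 (p q : R) : (0 < q)%R -> persp f p q = (q * f (p / q))%:E.
Proof. by move=> qp; rewrite /persp qp. Qed.

Lemma persp_neqNy (p q : R) : (0 <= p)%R -> (0 <= q)%R -> persp f p q != -oo.
Proof.
move=> p0; rewrite le_eqVlt => /predU1P[<-|qp]; last by rewrite persp_gt0.
rewrite persp0; move: p0; rewrite le_eqVlt => /predU1P[<-|pp]; first by rewrite mul0e.
by move: fslope_inf_neqNy; case: s => [r||] //= _; rewrite gt0_muley ?lte_fin.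
Qed.

Lemma perspZ (c p q : R) : (0 <= c)%R -> (0 <= q)%R ->
  persp f (c * p) (c * q) = c%:E * persp f p q.
Proof.
rewrite le_eqVlt => /predU1P[<-|cp]; first by rewrite !mul0r persp00 mul0e.
rewrite le_eqVlt => /predU1P[<-|qp]; first by rewrite mulr0 !persp0 EFinM muleA.
rewrite !persp_gt0 ?mulr_gt0 // -EFinM; congr (_%:E).
by rewrite invfM mulrACA mulfV ?gt_eqF // mul1r mulrA.
Qed.

Hypothesis convf : convex_nonneg f.

Lemma persp_add_slope (p1 p2 q : R) : (0 < q)%R -> (0 <= p1)%R -> (0 <= p2)%R ->
  persp f (p1 + p2) q <= persp f p1 q + p2%:E * s.
Proof.
move=> qp p10; rewrite le_eqVlt => /predU1P[<-|p2p].
  by rewrite addr0 mul0e adde0.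
move: fslope_inf_neqNy (fslope_inf_ge); rewrite !persp_gt0 //.
case: s => [r||] // _ slope_le; last by rewrite gt0_muley ?lte_fin // addey ?leey.
have fr t : (0 < t)%R -> (f t - f 0 <= r * t)%R.
  by move=> tp; have := slope_le t tp; rewrite lee_fin ler_pdivrMr.
have := convex_increment_le convf fr (divr_ge0 p10 (ltW qp)) (divr_ge0 (ltW p2p) (ltW qp)).
rewrite -mulrDl -(ler_pM2l qp) -EFinM -EFinD lee_fin.
have -> : (q * (r * (p2 / q)) = p2 * r)%R by field; rewrite gt_eqF.
lra.
Qed.

Lemma persp_subadd (p1 p2 q1 q2 : R) :
  (0 <= p1)%R -> (0 <= p2)%R -> (0 <= q1)%R -> (0 <= q2)%R ->
  persp f (p1 + p2) (q1 + q2) <= persp f p1 q1 + persp f p2 q2.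
Proof.
move=> p10 p20; rewrite le_eqVlt => /predU1P[<-|q1p];
  rewrite le_eqVlt => /predU1P[<-|q2p].
- by rewrite addr0 !persp0 EFinD ge0_muleDl.
- by rewrite add0r persp0 addrC addeC persp_add_slope.
- by rewrite addr0 persp0 persp_add_slope.
rewrite !persp_gt0 ?addr_gt0 // -EFinD lee_fin.
have w0 : (0 <= q1 / (q1 + q2))%R by rewrite divr_ge0 // ltW // addr_gt0.
have w1 : (q1 / (q1 + q2) <= 1)%R by rewrite ler_pdivrMr ?addr_gt0 // mul1r lerDl ltW.
have Qp : (0 < q1 + q2)%R := addr_gt0 q1p q2p.
have mixE : (q1 / (q1 + q2) * (p1 / q1) + (1 - q1 / (q1 + q2)) * (p2 / q2)
              = (p1 + p2) / (q1 + q2))%R by field; rewrite !gt_eqF.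
rewrite (_ : q1 * f (p1 / q1) + q2 * f (p2 / q2) = (q1 + q2) *
  (q1 / (q1 + q2) * f (p1 / q1) + (1 - q1 / (q1 + q2)) * f (p2 / q2)))%R; last first.
  by field; rewrite gt_eqF.
rewrite ler_pM2l // -mixE.
exact: convf (divr_ge0 p10 (ltW q1p)) (divr_ge0 p20 (ltW q2p)) w0 w1.
Qed.

Lemma persp_sum (I : Type) (r : seq I) (p q : I -> R) :
  (forall i, 0 <= p i)%R -> (forall i, 0 <= q i)%R ->
  persp f (\sum_(i <- r) p i) (\sum_(i <- r) q i) <= \sum_(i <- r) persp f (p i) (q i).
Proof.
move=> p0 q0; elim: r => [|i r IH]; first by rewrite !big_nil persp00.
rewrite !big_cons; apply: le_trans (leeD (lexx _) IH).
by apply: persp_subadd => //; apply: sumr_ge0.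
Qed.

End Perspective.

Section ExtendedSums.
Variable R : realType.
Local Open Scope ereal_scope.

Lemma EFin_mule_neqNy (c : R) (e : \bar R) : (0 <= c)%R -> e != -oo -> c%:E * e != -oo.
Proof.
rewrite le_eqVlt => /predU1P[<-|cp]; first by rewrite mul0e.
by case: e => [r||] //= _; rewrite gt0_muley ?lte_fin.
Qed.

Lemma EFin_sume_distrr (I : Type) (s : seq I) (P : pred I) (c : R) (F : I -> \bar R) :
  (forall i, P i -> F i != -oo) ->
  c%:E * \sum_(i <- s | P i) F i = \sum_(i <- s | P i) c%:E * F i.
Proof.
move=> FN; apply: fin_num_sume_distrr => // i j Pi Pj.
by apply: ltninfty_adde_def; rewrite inE ltNye FN.
Qed.

End ExtendedSums.

Section Jensen.
Variables (R : realType) (G : R -> R).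
Hypothesis convG : convex_nonneg G.
Local Open Scope ereal_scope.

(* Jensen's inequality is subadditivity of the perspective, taken at the points (w_i d_i, w_i). *)
Lemma convex_jensen (I : finType) (w d : I -> R) :
  (forall i, 0 <= w i)%R -> (forall i, 0 <= d i)%R -> (\sum_i w i = 1)%R ->
  (G (\sum_i w i * d i) <= \sum_i w i * G (d i))%R.
Proof.
move=> w0 d0 w1.
rewrite -lee_fin -sumEFin.
have := persp_sum convG (index_enum I) (fun i => mulr_ge0 (w0 i) (d0 i)) w0.
rewrite w1 persp_gt0 // divr1 mul1r => /le_trans; apply.
apply: lee_sum => i _; rewrite -[X in persp _ _ X]mulr1 perspZ //.
by rewrite persp_gt0 // divr1 mul1r EFinM.
Qed.

Lemma Gext_jensen (I : finType) (w : I -> R) (d : I -> \bar R) :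
  (forall i, 0 <= w i)%R -> (forall i, 0 <= d i) -> (\sum_i w i = 1)%R ->
  Gext G (\sum_i (w i)%:E * d i) <= \sum_i (w i)%:E * Gext G (d i).
Proof.
move=> w0 d0 w1.
have [[i [wi di]]|finite_d] := pselect (exists i, (0 < w i)%R /\ d i = +oo).
  rewrite [leRHS](bigD1 i) //= di /= gt0_muley ?lte_fin // addye ?leey //.
  rewrite esum_eqNy; apply/existsPn => j; rewrite negb_and orbC.
  apply/orP; left; apply: EFin_mule_neqNy => //.
  by move: (d0 j); case: (d j).
have fin_term i : (w i)%:E * d i = (w i * fine (d i))%:E /\
                  (w i)%:E * Gext G (d i) = (w i * G (fine (d i)))%:E.
  move: (w0 i); rewrite le_eqVlt => /predU1P[<-|wp]; first by rewrite !mul0e !mul0r.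
  move: (d0 i); case E: (d i) => [r||] //= _.
  by exfalso; apply: finite_d; exists i.
under eq_bigr do rewrite (fin_term _).1.
under [leRHS]eq_bigr do rewrite (fin_term _).2.
rewrite !sumEFin /= lee_fin; apply: convex_jensen => // i.
by move: (d0 i); case: (d i) => [r||] //=; rewrite lee_fin.
Qed.

End Jensen.

Lemma Gext_le (R : realType) (G : R -> R) (x y : \bar R) : incr_nonneg G ->
  (0 <= x)%E -> (x <= y)%E -> (Gext G x <= Gext G y)%E.
Proof.
move=> incrG; case: y => [y||]; [|by move=> _ _; rewrite leey|by case: x].
by case: x => [x||] //; rewrite !lee_fin; exact: incrG.
Qed.

Section Kernels.
Variable R : realType.

Definition push {T U : finType} (p : T -> R) (W : T -> U -> R) : U -> R :=
  fun u => \sum_t p t * W t u.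

Lemma push_ge0 {T U : finType} (p : T -> R) (W : T -> U -> R) u :
  (forall t, 0 <= p t) -> (forall t u, 0 <= W t u) -> 0 <= push p W u.
Proof. by move=> p0 W0; apply: sumr_ge0 => t _; apply: mulr_ge0. Qed.

Lemma sum_push {T U : finType} (p : T -> R) (W : T -> U -> R) :
  stoch W -> \sum_u push p W u = \sum_t p t.
Proof.
move=> Ws; rewrite exchange_big; apply: eq_bigr => t _.
by rewrite -big_distrr /= (Ws t).2 mulr1.
Qed.

Lemma push_distr {T U : finType} (p : T -> R) (W : T -> U -> R) :
  is_distr p -> stoch W -> is_distr (push p W).
Proof.
move=> [p0 p1] Ws; split; last by rewrite sum_push.
by move=> u; apply: push_ge0 => // t; case: (Ws t).
Qed.

Lemma stoch_push {S T U : finType} (V : S -> T -> R) (W : T -> U -> R) :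
  stoch V -> stoch W -> stoch (fun s => push (V s) W).
Proof. by move=> Vs Ws s; apply: push_distr. Qed.

End Kernels.

Section Divergence.
Variables (R : realType) (f : R -> R).
Hypothesis convf : convex_nonneg f.
Local Open Scope ereal_scope.

Lemma Df_ge0 (T : finType) (p q : T -> R) : (f 1 = 0)%R ->
  is_distr p -> is_distr q -> 0 <= Df f p q.
Proof.
move=> f1 [p0 p1] [q0 q1]; apply: le_trans (persp_sum convf _ p0 q0).
by rewrite p1 q1 persp_gt0 // divr1 f1 mulr0.
Qed.

Lemma sum_persp_mix_le (I T : finType) (c a b : I -> T -> R) :
  (forall i t, 0 <= c i t)%R -> (forall i t, 0 <= a i t)%R -> (forall i t, 0 <= b i t)%R ->
  \sum_t persp f (\sum_i c i t * a i t) (\sum_i c i t * b i t)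
    <= \sum_i \sum_t (c i t)%:E * persp f (a i t) (b i t).
Proof.
move=> c0 a0 b0; rewrite exchange_big; apply: lee_sum => t _.
apply: le_trans (persp_sum convf _ _ _) _ => [i|i|]; rewrite ?mulr_ge0 //.
by apply: lee_sum => i _; rewrite perspZ.
Qed.

Lemma Df_push (T U : finType) (p q : T -> R) (W : T -> U -> R) :
  (forall t, 0 <= p t)%R -> (forall t, 0 <= q t)%R -> stoch W ->
  Df f (push p W) (push q W) <= Df f p q.
Proof.
move=> p0 q0 Ws; have W0 t u : (0 <= W t u)%R by case: (Ws t).
rewrite /Df /push; under eq_bigr do under eq_bigr do rewrite mulrC.
under eq_bigr do under [X in persp _ _ X]eq_bigr do rewrite mulrC.
apply: le_trans (sum_persp_mix_le W0 (fun t _ => p0 t) (fun t _ => q0 t)) _.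
apply: lee_sum => t _; rewrite -ge0_sume_distrl; last by move=> u _; rewrite lee_fin.
by rewrite sumEFin (Ws t).2 mul1e.
Qed.

Lemma Df_mix (T U : finType) (w : T -> R) (K : T -> U -> R) (q : U -> R) :
  is_distr w -> (forall t u, 0 <= K t u)%R -> (forall u, 0 <= q u)%R ->
  Df f (push w K) q <= \sum_t (w t)%:E * Df f (K t) q.
Proof.
move=> [w0 w1] K0 q0.
have qE u : q u = (\sum_t w t * q u)%R by rewrite -big_distrl /= w1 mul1r.
rewrite /Df /push; under eq_bigr do rewrite [X in persp _ _ X]qE.
apply: le_trans (sum_persp_mix_le (fun t _ => w0 t) K0 (fun _ u => q0 u)) _.
apply: lee_sum => t _; rewrite EFin_sume_distrr // => u _.
exact: persp_neqNy.
Qed.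

End Divergence.

Section MarkovFactorization.
Variables (R : realType) (TA TX TY TB : finType) (P : TA -> TX -> TY -> TB -> R).
Variables (pA : TA -> R) (W1 : TA -> TX -> R) (W2 : TX -> TY -> R) (W3 : TY -> TB -> R).
Hypothesis PE : forall a x y b, P a x y b = pA a * W1 a x * W2 x y * W3 y b.

Lemma pAB_factor a b : pAB P a b = pA a * push (push (W1 a) W2) W3 b.
Proof.
rewrite /pAB /push exchange_big big_distrr; apply: eq_bigr => y _ /=.
rewrite mulr_suml big_distrr; apply: eq_bigr => x _ /=; rewrite PE; ring.
Qed.

Lemma pXY_factor : stoch W3 -> forall x y, pXY P x y = push pA W1 x * W2 x y.
Proof.
move=> W3s x y; rewrite /pXY /push big_distrl; apply: eq_bigr => a _ /=.
by under eq_bigr do rewrite PE; rewrite -big_distrr /= (W3s y).2 mulr1.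
Qed.

End MarkovFactorization.

Section Information.
Variables (R : realType) (G f : R -> R).
Local Open Scope ereal_scope.

Definition IGf_objective {TU TV : finType} (pU : TU -> R) (W : TU -> TV -> R) (q : TV -> R) :=
  \sum_u (pU u)%:E * Gext G (Df f (W u) q).

(* Outside the support of [pU] the conditional law [cond] is junk, but it is weighted by 0. *)
Lemma IGf_kernel (TU TV : finType) (pUV : TU -> TV -> R) (pU : TU -> R) (W : TU -> TV -> R) :
  (forall u, 0 <= pU u)%R -> stoch W -> (forall u v, pUV u v = pU u * W u v)%R ->
  IGf G f pUV = ereal_inf [set IGf_objective pU W q | q in [set q : TV -> R | is_distr q]].
Proof.
move=> pU0 Ws pUVE.
have margE u : marg1 pUV u = pU u.
  by rewrite /marg1; under eq_bigr do rewrite pUVE; rewrite -big_distrr /= (Ws u).2 mulr1.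
rewrite /IGf; congr ereal_inf; apply: eq_imagel => q _.
rewrite /IGf_objective big_mkcond; apply: eq_bigr => u _; rewrite margE.
case: ltP => [pUu|pUu]; last first.
  by rewrite (_ : pU u = 0%R) ?mul0e //; apply/le_anti; rewrite pUu pU0.
congr (_ * Gext G (Df f _ q)); apply/funext => v.
by rewrite /cond margE pUVE mulrC mulKf ?gt_eqF.
Qed.

Hypotheses (convf : convex_nonneg f) (f1 : f 1 = 0%R).
Hypotheses (convG : convex_nonneg G) (incrG : incr_nonneg G).

Lemma IGf_objective_markov_le (TA TX TY TB : finType) (pA : TA -> R)
    (W1 : TA -> TX -> R) (W2 : TX -> TY -> R) (W3 : TY -> TB -> R) (q : TY -> R) :
  is_distr pA -> stoch W1 -> stoch W2 -> stoch W3 -> is_distr q ->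
  IGf_objective pA (fun a => push (push (W1 a) W2) W3) (push q W3)
    <= IGf_objective (push pA W1) W2 q.
Proof.
move=> [pA0 _] W1s W2s W3s qd.
pose D x := Df f (W2 x) q.
have D0 x : 0 <= D x := Df_ge0 convf f1 (W2s x) qd.
have GD_neqNy x : Gext G (D x) != -oo by move: (D0 x); case: (D x).
have W2_0 x y : (0 <= W2 x y)%R by case: (W2s x).
have step a : Gext G (Df f (push (push (W1 a) W2) W3) (push q W3))
              <= \sum_x (W1 a x)%:E * Gext G (D x).
  apply: le_trans (Gext_jensen convG (W1s a).1 D0 (W1s a).2).
  apply: Gext_le incrG _ _.
    by apply: (Df_ge0 convf f1); apply: push_distr => //; apply: push_distr.
  apply: le_trans (Df_mix convf (W1s a) W2_0 qd.1).
  apply: (Df_push convf) => // y; last exact: qd.1 y.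
  by apply: push_ge0 => // x; case: (W1s a).
rewrite /IGf_objective.
apply: le_trans (_ : _ <= \sum_a (pA a)%:E * \sum_x (W1 a x)%:E * Gext G (D x)) _.
  by apply: lee_sum => a _; apply: lee_wpmul2l; rewrite ?lee_fin.
have WGD_neqNy a x : (W1 a x)%:E * Gext G (D x) != -oo.
  by apply: EFin_mule_neqNy (GD_neqNy x); case: (W1s a).
under eq_bigr => a _ do rewrite (EFin_sume_distrr _ _ (fun x _ => WGD_neqNy a x)).
rewrite exchange_big; apply: lee_sum => x _ /=; rewrite /push -sumEFin.
rewrite ge0_sume_distrl => [|a _]; last by rewrite lee_fin mulr_ge0 //; case: (W1s a).
by apply: lee_sum => a _; rewrite muleA EFinM.
Qed.

End Information.

Theorem lemma3 (R : realType) (TA TX TY TB : finType)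
    (P : TA -> TX -> TY -> TB -> R) (f G : R -> R) :
  markov4 P ->
  convex_nonneg f -> f 1 = 0 ->
  convex_nonneg G -> incr_nonneg G ->
  (IGf G f (pAB P) <= IGf G f (pXY P))%E.
Proof.
move=> [pA [W1 [W2 [W3 [pAd W1s W2s W3s PE]]]]] convf f1 convG incrG.
have pX0 x : 0 <= push pA W1 x by apply: push_ge0 pAd.1 _ => a; case: (W1s a).
rewrite (IGf_kernel _ _ pAd.1 (stoch_push (stoch_push W1s W2s) W3s) (pAB_factor PE)).
rewrite (IGf_kernel _ _ pX0 W2s (pXY_factor PE W3s)).
apply: le_ereal_inf_tmp => _ [q qd <-]; apply: ge_ereal_inf.
exists (IGf_objective G f pA (fun a => push (push (W1 a) W2) W3) (push q W3)).
  by exists (push q W3) => //; apply: push_distr.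
exact: IGf_objective_markov_le.
Qed.
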